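(* There exists a system $S$ of communicating finite state machines (with peer-to-peer FIFO communication) that is $1$-synchronizable but not synchronizable.
   Context: A message set $M=(\Sigma_M,n,\mathrm{src},\mathrm{dst})$ consists of a finite set $\Sigma_M$ of messages, a number $n\ge 1$ of peers, and maps $\mathrm{src},\mathrm{dst}:\Sigma_M\to\{1,\dots,n\}$ with $\mathrm{src}(a)\neq\mathrm{dst}(a)$. Actions are $!a$ (send, performed by peer $\mathrm{src}(a)$) and $?a$ (receive, performed by peer $\mathrm{dst}(a)$), $a\in\Sigma_M$. An $M$-trace is a finite sequence of actions; $!?a$ abbreviates $!a\cdot ?a$. For a trace $\tau$: $\pi_!(\tau)$ is the sequence of messages sent in $\tau$; $\pi_?(\tau)$ the sequence of messages received; for channel $i\to j$, $\mathrm{buf}_{i\to j}(\tau)$ is the word $w$ (if it exists) such that (sent messages on channel $i\to j$ in $\tau$) $=$ (received messages on channel $i\to j$ in $\tau$)$\cdot w$. $\tau$ is FIFO (resp. $k$-bounded FIFO) if for all $i,j$ and all prefixes $\tau'$ of $\tau$, $\mathrm{buf}_{i\to j}(\tau')$ is defined (resp. defined and of length $\le k$). $\tau$ is synchronous if $\tau=!?a_1\cdots !?a_k$ for some $k\ge0$. A system $S=(P_1,\dots,P_n)$ consists of finite automata $P_i$ (all states accepting) over the actions of peer $i$. A configuration is a tuple of control states, one per peer, together with a word $w_{i,j}\in\Sigma_M^*$ (content of FIFO channel $i\to j$) for each $i\neq j$; it is stable if all channels are empty. A send $!a$ with $\mathrm{src}(a)=i,\mathrm{dst}(a)=j$ moves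 $P_i$ along a $!a$-transition and appends $a$ to $w_{i,j}$; a receive $?a$ moves $P_j$ along a $?a$-transition and removes $a$ from the head of $w_{i,j}$. The initial configuration $c_0$ has initial states and empty channels. A trace of $S$ is a $\tau$ with $c_0\xrightarrow{\tau}c$ for some $c$. $T_k(S)$ ($k\ge1$) is the set of $k$-bounded FIFO traces of $S$, $T_0(S)$ the set of synchronous traces of $S$, $T_\omega(S)=\bigcup_{k\ge0}T_k(S)$. $ST_k(S)=\{\pi_!(\tau)\mid \tau\in T_k(S)\}\cup\{(\pi_!(\tau),c)\mid c_0\xrightarrow{\tau}c,\ c\text{ stable},\ \tau\in T_k(S)\}$. $S$ is synchronizable if $ST_0(S)=ST_\omega(S)$, and $k$-synchronizable ($k\ge1$) if $ST_0(S)=ST_k(S)$. *)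

From mathcomp Require Import all_boot.
Set Implicit Arguments. Unset Strict Implicit. Unset Printing Implicit Defensive.

Record msgset := MsgSet {
  msg : finType;
  npeers : nat;
  npeers_pos : 0 < npeers;
  src : msg -> 'I_npeers;
  dst : msg -> 'I_npeers;
  src_neq_dst : forall a, src a != dst a }.

Section CFSM.
Variable M : msgset.
Local Notation peer := 'I_(npeers M).
Local Notation Msg := (msg M).

Inductive action := Send of Msg | Recv of Msg.

Definition actor (x : action) : peer :=
  match x with Send a => src a | Recv a => dst a end.

(* A system: one finite automaton per peer (all states accepting).  All
   automata use a common finite type of control states (w.l.o.g.); the
   transitions of P_i are labelled only by actions of peer i. *)
Record system := System {
  state : finType;
  init : peer -> state;
  delta : peer -> state -> action -> state -> bool;
  delta_wf : forall i q x q', delta i q x q' -> actor x = i }.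

Variable S : system.

(* Configurations: control states and FIFO channel contents w_{i,j}
   (the entries (i,i) are never used and stay empty). *)
Record config := Config {
  cst : {ffun peer -> state S};
  cch : {ffun peer * peer -> seq Msg} }.

Definition c0 : config := Config [ffun i => @init S i] [ffun _ => [::]].

Definition stable (c : config) : Prop :=
  forall i j : peer, i != j -> cch c (i, j) = [::].

Definition step (c : config) (x : action) (c' : config) : Prop :=
  match x with
  | Send a =>
      exists q', @delta S (src a) (cst c (src a)) (Send a) q' /\
        c' = Config [ffun k => if k == src a then q' else cst c k]
                    [ffun p => if p == (src a, dst a) then rcons (cch c p) a
                               else cch c p]
  | Recv a =>
      exists q' w, @delta S (dst a) (cst c (dst a)) (Recv a) q' /\
        cch c (src a, dst a) = a :: w /\
        c' = Config [ffun k => if k == dst a then q' else cst c k]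
                    [ffun p => if p == (src a, dst a) then w else cch c p]
  end.

Inductive runs : config -> seq action -> config -> Prop :=
  | runs_nil c : runs c [::] c
  | runs_cons c x c' tau c'' :
      step c x c' -> runs c' tau c'' -> runs c (x :: tau) c''.

Definition is_trace (tau : seq action) : Prop := exists c, runs c0 tau c.

Definition sends (tau : seq action) : seq Msg :=
  pmap (fun x => if x is Send a then Some a else None) tau.
Definition recvs (tau : seq action) : seq Msg :=
  pmap (fun x => if x is Recv a then Some a else None) tau.

Definition buf (i j : peer) (tau : seq action) : option (seq Msg) :=
  let onch := fun a : Msg => (src a == i) && (dst a == j) in
  let s := filter onch (sends tau) in
  let r := filter onch (recvs tau) in
  if take (size r) s == r then Some (drop (size r) s) else None.

Definition fifo (tau : seq action) : Prop :=
  forall (n : nat) (i j : peer), exists w, buf i j (take n tau) = Some w.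

Definition kbounded_fifo (k : nat) (tau : seq action) : Prop :=
  forall (n : nat) (i j : peer),
    exists w, buf i j (take n tau) = Some w /\ size w <= k.

Definition synchronous (tau : seq action) : Prop :=
  exists s : seq Msg, tau = flatten (map (fun a => [:: Send a; Recv a]) s).

Definition inT (k : nat) (tau : seq action) : Prop :=
  is_trace tau /\ (if k is 0 then synchronous tau else kbounded_fifo k tau).

Definition ST (k : nat) (x : seq Msg + (seq Msg * config)) : Prop :=
  match x with
  | inl s => exists tau, inT k tau /\ s = sends tau
  | inr (s, c) => exists tau, inT k tau /\ runs c0 tau c /\ stable c /\
                              s = sends tau
  end.

(* ST_omega = union of all ST_k (since T_omega is the union of all T_k). *)
Definition STomega (x : seq Msg + (seq Msg * config)) : Prop :=
  exists k, ST k x.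

Definition synchronizable : Prop := forall x, ST 0 x <-> STomega x.

Definition k_synchronizable (k : nat) : Prop := forall x, ST 0 x <-> ST k x.

End CFSM.

From mathcomp Require Import all_boot.
Set Implicit Arguments. Unset Strict Implicit. Unset Printing Implicit Defensive.

(* The witness has three peers: P sends a, a, b; R receives b and then sends
   c to Q; Q receives either a, a, c or c, a, a.  With 2-bounded channels the
   run !a !a !b ?b !c ?c ?a ?a ends in a stable configuration where Q took the
   c-first branch; synchronously c is sent only after Q received both a's, so
   no synchronous run reaches it.  With 1-bounded channels the second a is
   sent only after Q received the first one, so Q never takes that branch and
   every 1-bounded run is matched by the synchronous run with the same sends.
   The configurations reachable with 1-bounded channels are finitely many, so
   the latter is established by exploring them exhaustively and checking the
   resulting finite certificate by computation. *)

(* [enum 'I_n] does not reduce under [vm_compute] (it goes through the opaque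
   [idP]), but this enumeration does; for the same reason the exploration
   below takes explicit enumerations of messages and states. *)
Fixpoint ordinals n : seq 'I_n :=
  if n is m.+1 then ord0 :: map (lift ord0) (ordinals m) else [::].

Lemma mem_ordinals n (i : 'I_n) : i \in ordinals n.
Proof.
elim: n i => [|n IHn] i; first by case: i.
case: (unliftP ord0 i) => [j ->|->]; rewrite inE ?eqxx // mem_map ?IHn ?orbT //.
exact: lift_inj.
Qed.

Lemma nth_map_index (T : eqType) (rT : Type) (f : T -> rT) (s : seq T) y0 x :
  x \in s -> nth y0 (map f s) (index x s) = f x.
Proof. by move=> s_x; rewrite (nth_map x) ?index_mem // nth_index. Qed.

Section Traces.
Variable M : msgset.
Local Notation peer := 'I_(npeers M).
Implicit Types (tau : seq (action M)) (s w : seq (msg M)).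

Definition sync_trace s : seq (action M) := flatten [seq [:: Send a; Recv a] | a <- s].

Definition on_channel (i j : peer) (a : msg M) := (src a == i) && (dst a == j).

Lemma sends_cat tau1 tau2 : sends (tau1 ++ tau2) = sends tau1 ++ sends tau2.
Proof. exact: pmap_cat. Qed.

Lemma recvs_cat tau1 tau2 : recvs (tau1 ++ tau2) = recvs tau1 ++ recvs tau2.
Proof. exact: pmap_cat. Qed.

Lemma sends_sync_trace s : sends (sync_trace s) = s.
Proof. by elim: s => //= a s IHs; rewrite /sends /= -/(sends _) IHs. Qed.

Lemma buf_of_sends_recvs tau w (i j : peer) :
  sends tau = recvs tau ++ w -> buf i j tau = Some [seq a <- w | on_channel i j a].
Proof.
by move=> Etau; rewrite /buf Etau filter_cat take_size_cat // drop_size_cat // eqxx.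
Qed.

Lemma sync_trace_take s n :
  exists2 w, sends (take n (sync_trace s)) = recvs (take n (sync_trace s)) ++ w
           & size w <= 1.
Proof.
elim: s n => [|a s IHs] [|[|n]]; try by exists [::].
  by exists [:: a].
have [w Ew w_small] := IHs n; exists w => //.
by rewrite /sends /recvs /= -/(sends _) -/(recvs _) Ew.
Qed.

Lemma synchronous_kbounded_fifo k tau : synchronous tau -> kbounded_fifo k.+1 tau.
Proof.
move=> [s ->] n i j; have [w Ew w_small] := sync_trace_take s n.
exists [seq a <- w | on_channel i j a]; split; first exact: buf_of_sends_recvs.
by rewrite size_filter (leq_trans (count_size _ _) (leq_trans w_small _)).
Qed.

Lemma kbounded_fifo_take k tau m : kbounded_fifo k tau -> kbounded_fifo k (take m tau).
Proof. by move=> bounded n; rewrite -take_min; apply: bounded. Qed.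

Definition kbounded_fifob k tau :=
  all (fun n => all (fun i => all (fun j =>
         if buf i j (take n tau) is Some w then size w <= k else false)
       (ordinals _)) (ordinals _)) (iota 0 (size tau).+1).

Lemma kbounded_fifobP k tau : kbounded_fifob k tau -> kbounded_fifo k tau.
Proof.
move=> /allP bounded n i j.
have := bounded (minn n (size tau)); rewrite mem_iota ltnS geq_minr take_min take_size.
move=> /(_ isT) /allP /(_ i (mem_ordinals i)) /allP /(_ j (mem_ordinals j)).
by case: buf => // w; exists w.
Qed.

End Traces.

Section Runs.
Variables (M : msgset) (S : system M).
Local Notation peer := 'I_(npeers M).
Implicit Types (c : config S) (tau : seq (action M)).

Lemma runs_nil_inv c c' : runs c [::] c' -> c' = c.
Proof. by move=> run; inversion run. Qed.

Lemma runs_rcons_inv c tau x c'' :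
  runs c (rcons tau x) c'' -> exists2 c', runs c tau c' & step c' x c''.
Proof.
elim: tau c => [|y tau IHtau] c run; inversion run as [|? ? c1 ? ? step1 run1]; subst.
  by exists c; [exact: runs_nil | rewrite (runs_nil_inv run1)].
have [c' run' step'] := IHtau c1 run1.
by exists c'; first exact: runs_cons step1 run'.
Qed.

Definition channels_consistent tau c := forall i j : peer,
  [seq a <- sends tau | on_channel i j a] = [seq a <- recvs tau | on_channel i j a] ++ cch c (i, j).

Lemma step_consistent tau c x c' :
  channels_consistent tau c -> step c x c' -> channels_consistent (rcons tau x) c'.
Proof.
move=> consistent; rewrite -cats1; case: x => a /=.
  move=> [q' [_ ->]] i j /=; rewrite sends_cat recvs_cat !filter_cat consistent ffunE /=.
  rewrite cats0 -catA /on_channel xpair_eqE [i == _]eq_sym [j == _]eq_sym.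
  by case: ifP; rewrite ?cats1 ?cats0.
move=> [q' [w [_ [Ech ->]]]] i j /=; rewrite sends_cat recvs_cat !filter_cat consistent ffunE /=.
rewrite cats0 -catA /on_channel xpair_eqE [i == _]eq_sym [j == _]eq_sym.
by case: ifP => // /andP [/eqP <- /eqP <-]; rewrite Ech.
Qed.

Lemma runs_consistent c tau' c' : runs c tau' c' ->
  forall tau, channels_consistent tau c -> channels_consistent (tau ++ tau') c'.
Proof.
elim=> [c1 | c1 x c2 t c3 step1 _ IH] tau consistent; first by rewrite cats0.
by rewrite -cat1s catA cats1; apply/IH/(step_consistent consistent).
Qed.

Lemma runs_buf tau c (i j : peer) : runs (c0 S) tau c -> buf i j tau = Some (cch c (i, j)).
Proof.
move=> run; have c0_consistent : channels_consistent [::] (c0 S) by move=> ? ?; rewrite ffunE.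
have Ech := runs_consistent run c0_consistent i j.
by rewrite /buf -/(on_channel i j) Ech take_size_cat // drop_size_cat // eqxx.
Qed.

Lemma runs_kbounded k tau c :
  runs (c0 S) tau c -> kbounded_fifo k tau -> forall p, size (cch c p) <= k.
Proof.
move=> run bounded [i j]; have [w []] := bounded (size tau) i j.
by rewrite take_size (runs_buf _ _ run) => -[<-].
Qed.

Lemma inT_sync_bounded k tau : inT S 0 tau -> inT S k.+1 tau.
Proof. by move=> [trace sync]; split; last exact: synchronous_kbounded_fifo. Qed.

Lemma ST_sync_bounded k x : ST (S := S) 0 x -> ST (S := S) k.+1 x.
Proof.
case: x => [s | [s c]] [tau [inT0 rest]]; exists tau; split=> //.
all: exact: inT_sync_bounded.
Qed.

Lemma not_synchronizable_of_run k tau c :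
  runs (c0 S) tau c -> kbounded_fifo k.+1 tau -> stable c ->
  ~ runs (c0 S) (sync_trace (sends tau)) c -> ~ synchronizable S.
Proof.
move=> run bounded stable_c no_sync_run synchronizable_S.
have : STomega (S := S) (inr (sends tau, c)).
  by exists k.+1, tau; split; first by split; first by exists c.
move=> /synchronizable_S [_ [[_ [s ->]] [run' [_ Esends]]]].
by apply: no_sync_run; rewrite Esends sends_sync_trace.
Qed.

End Runs.

Section Exploration.
Variables (M : msgset) (S : system M) (msgs : seq (msg M)) (states : seq (state S)).
Hypotheses (msgsP : forall a, a \in msgs) (statesP : forall q, q \in states).
Local Notation peer := 'I_(npeers M).
Local Notation channel := (peer * peer)%type.
Implicit Types (c : config S) (tau : seq (action M)).

Definition peers : seq peer := ordinals _.
Definition channels : seq channel := [seq (i, j) | i <- peers, j <- peers].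

Lemma mem_channels p : p \in channels.
Proof. by case: p => i j; apply: allpairs_f; apply: mem_ordinals. Qed.

Definition snapshot := (seq (state S) * seq (seq (msg M)))%type.
Implicit Type L : seq (snapshot * seq (msg M)).

Definition snap c : snapshot := (map (cst c) peers, map (cch c) channels).

Definition snap0 : snapshot := (map (init S) peers, map (fun=> [::]) channels).

Definition snap_state (g : snapshot) (i : peer) := nth (init S i) g.1 (index i peers).

Definition snap_chan (g : snapshot) (p : channel) := nth [::] g.2 (index p channels).

Lemma snap_stateE c i : snap_state (snap c) i = cst c i.
Proof. exact/nth_map_index/mem_ordinals. Qed.

Lemma snap_chanE c p : snap_chan (snap c) p = cch c p.
Proof. exact/nth_map_index/mem_channels. Qed.

Lemma snap_inj : injective snap.
Proof.
move=> [st1 ch1] [st2 ch2] [/eq_in_map Est /eq_in_map Ech].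
by congr Config; apply/ffunP => x;
  [apply: Est; apply: mem_ordinals | apply: Ech; apply: mem_channels].
Qed.

Lemma snap_Config (f : peer -> state S) (h : channel -> seq (msg M)) :
  snap (Config (finfun f) (finfun h)) = (map f peers, map h channels).
Proof. by congr pair; apply: eq_map => ?; rewrite ffunE. Qed.

Lemma snap_c0 : snap (c0 S) = snap0.
Proof. exact: snap_Config. Qed.

Definition snap_step (g : snapshot) (x : action M) (q' : state S) : option snapshot :=
  let next_states i := [seq if k == i then q' else snap_state g k | k <- peers] in
  let next_chans ch (f : channel -> seq (msg M)) :=
    [seq if p == ch then f p else snap_chan g p | p <- channels] in
  match x with
  | Send a =>
      if delta (src a) (snap_state g (src a)) x q' then
        Some (next_states (src a),
              next_chans (src a, dst a) (fun p => rcons (snap_chan g p) a))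
      else None
  | Recv a =>
      if delta (dst a) (snap_state g (dst a)) x q' then
        if snap_chan g (src a, dst a) is b :: w then
          if b == a then Some (next_states (dst a), next_chans (src a, dst a) (fun=> w))
          else None
        else None
      else None
  end.

Lemma snap_step_complete c x c' :
  step c x c' -> exists q', snap_step (snap c) x q' = Some (snap c').
Proof.
case: x => a /=.
  move=> [q' [trans ->]]; exists q'; rewrite snap_stateE trans snap_Config.
  by congr (Some (_, _)); apply: eq_map => ?; rewrite ?snap_stateE ?snap_chanE.
move=> [q' [w [trans [Ech ->]]]]; exists q'.
rewrite snap_stateE trans snap_chanE Ech eqxx snap_Config.
by congr (Some (_, _)); apply: eq_map => ?; rewrite ?snap_stateE ?snap_chanE.
Qed.

Lemma snap_step_sound c x q' g :
  snap_step (snap c) x q' = Some g -> exists2 c', step c x c' & snap c' = g.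
Proof.
case: x => a /=; rewrite snap_stateE; case: ifP => // trans.
  move=> [<-]; eexists; first by exists q'; split; first exact: trans.
  by rewrite snap_Config; congr (_, _); apply: eq_map => ?; rewrite ?snap_stateE ?snap_chanE.
rewrite snap_chanE; case Ech: (cch c _) => [|b w] //; case: eqP => // Eba [<-]; subst b.
eexists; first by exists q', w; split; first exact: trans.
by rewrite snap_Config; congr (_, _); apply: eq_map => ?; rewrite ?snap_stateE ?snap_chanE.
Qed.

Definition snap_succ (g : snapshot) (x : action M) : seq snapshot :=
  pmap (snap_step g x) states.

Lemma mem_snap_succ c x g : g \in snap_succ (snap c) x <-> exists2 c', step c x c' & snap c' = g.
Proof.
rewrite mem_pmap; split; first by move=> /mapP [q' _ /esym /snap_step_sound].
move=> [c' step_c <-]; have [q' Eq'] := snap_step_complete step_c.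
by apply/mapP; exists q'; rewrite ?statesP ?Eq'.
Qed.

Fixpoint snap_reach (g : snapshot) tau : seq snapshot :=
  if tau is x :: tau' then flatten [seq snap_reach g' tau' | g' <- snap_succ g x] else [:: g].

Lemma snap_reachP c tau g :
  g \in snap_reach (snap c) tau <-> exists2 c', runs c tau c' & snap c' = g.
Proof.
elim: tau c => [|x tau IHtau] c /=.
  rewrite mem_seq1; split; first by move=> /eqP ->; exists c; first exact: runs_nil.
  by move=> [c' /runs_nil_inv -> <-].
split.
  move=> /flatten_mapP [_ /mem_snap_succ [c1 step1 <-]] /(IHtau c1) [c' run' <-].
  by exists c'; first exact: runs_cons step1 run'.
move=> [c' run Eg]; inversion run as [|? ? c1 ? ? step1 run1]; subst.
apply/flatten_mapP; exists (snap c1); first by apply/mem_snap_succ; exists c1.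
by apply/IHtau; exists c'.
Qed.

Definition snap_stable (g : snapshot) :=
  all (fun p => (p.1 == p.2) || (snap_chan g p == [::])) channels.

Lemma snap_stableP c : reflect (stable c) (snap_stable (snap c)).
Proof.
apply: (iffP allP) => [empty i j ij | st [i j] _ /=].
  by have := empty (i, j) (mem_channels _); rewrite /= (negbTE ij) snap_chanE => /eqP.
by rewrite snap_chanE; case: eqP => [// | /eqP ij]; rewrite st.
Qed.

Definition snap_bounded k (g : snapshot) := all (fun w => size w <= k) g.2.

Lemma snap_bounded_config k c : (forall p, size (cch c p) <= k) -> snap_bounded k (snap c).
Proof. by move=> small; apply/allP => _ /mapP [p _ ->]. Qed.

(* A certificate entry pairs a snapshot with the messages sent on the way to it. *)
Definition bounded_succ k (e : snapshot * seq (msg M)) : seq (snapshot * seq (msg M)) :=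
  flatten [seq [seq (g, e.2 ++ [:: a]) | g <- snap_succ e.1 (Send a) & snap_bounded k g]
            ++ [seq (g, e.2) | g <- snap_succ e.1 (Recv a) & snap_bounded k g]
          | a <- msgs].

Lemma mem_bounded_succ k e x g :
  g \in snap_succ e.1 x -> snap_bounded k g -> (g, e.2 ++ sends [:: x]) \in bounded_succ k e.
Proof.
move=> succ_g bounded_g; apply/flatten_mapP.
case: x succ_g => a succ_g; exists a; rewrite ?msgsP // mem_cat.
  by apply/orP; left; apply/mapP; exists g; rewrite ?mem_filter ?bounded_g.
by apply/orP; right; apply/mapP; exists g; rewrite ?mem_filter ?bounded_g ?cats0.
Qed.

Definition bounded_closed k L := all (fun e => all (mem L) (bounded_succ k e)) L.

Definition bounded_explore k n :=
  iter n (fun L => undup (L ++ flatten [seq bounded_succ k e | e <- L])) [:: (snap0, [::])].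

Lemma bounded_trace_mem k L tau c :
  (snap0, [::]) \in L -> bounded_closed k L ->
  runs (c0 S) tau c -> kbounded_fifo k tau -> (snap c, sends tau) \in L.
Proof.
move=> L0 /allP closed; elim/last_ind: tau c => [|tau x IHtau] c run bounded.
  by rewrite (runs_nil_inv run) snap_c0.
have [c1 run1 step1] := runs_rcons_inv run.
have L1 : (snap c1, sends tau) \in L.
  apply: IHtau run1 _; rewrite -(take_size_cat [:: x] (erefl (size tau))) cats1.
  exact: kbounded_fifo_take.
apply: (allP (closed _ L1)); rewrite -cats1 sends_cat; apply: mem_bounded_succ.
  by apply/mem_snap_succ; exists c.
exact/snap_bounded_config/(runs_kbounded run bounded).
Qed.

Definition sync_realized L :=
  all (fun e => let R := snap_reach snap0 (sync_trace e.2) in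
                (R != [::]) && (snap_stable e.1 ==> (e.1 \in R))) L.

Lemma sync_replay_of_certificate k L tau c :
  (snap0, [::]) \in L -> bounded_closed k L -> sync_realized L ->
  runs (c0 S) tau c -> kbounded_fifo k tau ->
  is_trace S (sync_trace (sends tau)) /\ (stable c -> runs (c0 S) (sync_trace (sends tau)) c).
Proof.
move=> L0 closed /allP realized run bounded.
have /andP [/eqP nonempty stable_reached] := realized _ (bounded_trace_mem L0 closed run bounded).
rewrite -snap_c0 in nonempty stable_reached; split.
  case R: snap_reach nonempty => [// | g ?] _.
  have /snap_reachP [c' run' _] : g \in snap_reach (snap (c0 S)) (sync_trace (sends tau)).
    by rewrite R mem_head.
  by exists c'.
move=> /snap_stableP /(implyP stable_reached) /snap_reachP [c' run' /snap_inj Ec'].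
by rewrite -Ec'.
Qed.

Lemma k_synchronizable_of_certificate k L :
  (snap0, [::]) \in L -> bounded_closed k.+1 L -> sync_realized L ->
  k_synchronizable S k.+1.
Proof.
move=> L0 closed realized x; split; first exact: ST_sync_bounded.
case: x => [s | [s c]] [tau [[[c' run] bounded] rest]].
  have [trace' _] := sync_replay_of_certificate L0 closed realized run bounded.
  exists (sync_trace (sends tau)); rewrite sends_sync_trace rest.
  by split; first by split; last by exists (sends tau).
move: rest => [run' [stable_c ->]].
have [_ /(_ stable_c) run_sync] := sync_replay_of_certificate L0 closed realized run' bounded.
exists (sync_trace (sends tau)); rewrite sends_sync_trace.
by split; first by split; [exists c | exists (sends tau)].
Qed.

Lemma not_synchronizable_of_snap k tau :
  kbounded_fifob k.+1 tau ->
  has (fun g => snap_stable g && (g \notin snap_reach snap0 (sync_trace (sends tau))))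
      (snap_reach snap0 tau) ->
  ~ synchronizable S.
Proof.
move=> /kbounded_fifobP bounded /hasP [g]; rewrite -snap_c0.
move=> /snap_reachP [c run <-] /andP [/snap_stableP stable_c no_sync].
apply: (not_synchronizable_of_run run bounded stable_c) => run_sync.
by move/negP: no_sync; apply; apply/snap_reachP; exists c.
Qed.

End Exploration.

Definition peerP : 'I_3 := @Ordinal 3 0 isT.
Definition peerQ : 'I_3 := @Ordinal 3 1 isT.
Definition peerR : 'I_3 := @Ordinal 3 2 isT.

Definition msg_a : 'I_3 := @Ordinal 3 0 isT.
Definition msg_b : 'I_3 := @Ordinal 3 1 isT.
Definition msg_c : 'I_3 := @Ordinal 3 2 isT.

Definition example_src (m : 'I_3) := if m == msg_c then peerR else peerP.
Definition example_dst (m : 'I_3) := if m == msg_b then peerR else peerQ.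

Lemma example_src_neq_dst m : example_src m != example_dst m.
Proof. by case: m => -[|[|[|]]]. Qed.

Definition example_msgset : msgset :=
  @MsgSet 'I_3 3 isT example_src example_dst example_src_neq_dst.

(* P : 0 -!a-> 1 -!a-> 2 -!b-> 3
   Q : 0 -?a-> 1 -?a-> 2 -?c-> 3  and  0 -?c-> 4 -?a-> 5 -?a-> 6
   R : 0 -?b-> 1 -!c-> 2
   Each message has a single sender and a single receiver, so a transition
   is determined by its source state, message and target state. *)
Definition example_sends : seq (nat * 'I_3 * nat) :=
  [:: (0, msg_a, 1); (1, msg_a, 2); (2, msg_b, 3); (1, msg_c, 2)].
Definition example_recvs : seq (nat * 'I_3 * nat) :=
  [:: (0, msg_a, 1); (1, msg_a, 2); (2, msg_c, 3);
      (0, msg_c, 4); (4, msg_a, 5); (5, msg_a, 6); (0, msg_b, 1)].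

Definition example_delta (i : 'I_3) (q : 'I_7) (x : action example_msgset) (q' : 'I_7) :=
  (actor x == i) &&
  match x with
  | Send m => (val q, m, val q') \in example_sends
  | Recv m => (val q, m, val q') \in example_recvs
  end.

Lemma example_delta_actor i q x q' : example_delta i q x q' -> actor x = i.
Proof. by move=> /andP [/eqP]. Qed.

Definition example_system : system example_msgset :=
  @System example_msgset 'I_7 (fun=> ord0) example_delta example_delta_actor.

Definition example_msgs : seq (msg example_msgset) := ordinals 3.
Definition example_states : seq (state example_system) := ordinals 7.

Local Notation send := (@Send example_msgset).
Local Notation recv := (@Recv example_msgset).

Definition example_witness :=
  [:: send msg_a; send msg_a; send msg_b; recv msg_b;
      send msg_c; recv msg_c; recv msg_a; recv msg_a].

Theorem theorem2p3 :
  exists (M : msgset) (S : system M),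
    k_synchronizable S 1 /\ ~ synchronizable S.
Proof.
exists example_msgset, example_system; split.
  (* 8 rounds reach all 12 configurations of the 1-bounded semantics. *)
  apply: (k_synchronizable_of_certificate (msgs := example_msgs) (states := example_states)
            (@mem_ordinals 3) (@mem_ordinals 7)
            (L := bounded_explore example_msgs example_states 1 8)).
  - by vm_compute.
  - by vm_compute.
  - by vm_compute.
apply: (not_synchronizable_of_snap (states := example_states) (@mem_ordinals 7) (k := 1)
          (tau := example_witness)).
- by vm_compute.
- by vm_compute.
Qed.
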